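(* Let $0<c<\Gamma_0$ and $t>0$, and let $\mathcal D=\{(\tau,p):0<\tau<t,\ c<p<\Gamma_0\}$. Let $A$ be the cooperation area and regions II, III, VII as defined in the context. Then: - the maximum of $A$ over the closure (in $\mathcal D$) of region II is attained at $(\tau,p)=\left(\tfrac12 t,\ \sqrt{c\Gamma_0}\right)$; - the maximum over the closure of region III is attained at $\left(\frac{\Gamma_0}{\Gamma_0+c}t,\ \frac{2\Gamma_0 c}{\Gamma_0+c}\right)$; - the maximum over the closure of region VII is attained at $\left(\frac{\Gamma_0-\sqrt{c\Gamma_0}}{\Gamma_0-c}t,\ \sqrt{c\Gamma_0}\right)$.
   Context: The client utility is linear: $\Gamma(d)=\Gamma_0(1-d)$. For $(\tau,p)\in\mathcal D$ write $s=\tau/t$ and, for $w\in(0,1]$, set $K(w)=1-(1-w)s$. Define $$d_s(w;\tau,p)=1-\frac{cK(w)}{wp},\qquad d_c(w;\tau,p)=1-\frac{p}{\Gamma_0K(w)}.$$ The cooperation area is $$A(\tau,p)=\int_0^1\max\{\min(d_s(w;\tau,p),d_c(w;\tau,p)),0\}\,dw.$$ The regions (subsets of $\mathcal D$) are: - region II: $p^2\ge 4c\Gamma_0 s(1-s)$, $p<\Gamma_0(1-s)+cs$, $p<\sqrt{c\Gamma_0}$, and $s<\tfrac12$; - region III: $p^2\ge 4c\Gamma_0 s(1-s)$, $p<\Gamma_0(1-s)+cs$, $p<\sqrt{c\Gamma_0}$, and $s>\frac{\Gamma_0}{\Gamma_0+c}$; - region VII: $p^2\ge4c\Gamma_0 s(1-s)$,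 $p>\Gamma_0(1-s)+cs$, and $p>\sqrt{c\Gamma_0}$. *)

From Stdlib Require Import Reals Lra.
From Coquelicot Require Import Coquelicot.
Open Scope R_scope.

Definition sK (t tau : R) : R := tau / t.

Definition Kw (t tau w : R) : R := 1 - (1 - w) * sK t tau.

Definition d_s (c t tau p w : R) : R := 1 - c * Kw t tau w / (w * p).

Definition d_c (G0 t tau p w : R) : R := 1 - p / (G0 * Kw t tau w).

Definition coopArea (c G0 t tau p : R) : R :=
  RInt (fun w => Rmax (Rmin (d_s c t tau p w) (d_c G0 t tau p w)) 0) 0 1.

Definition inD (c G0 t : R) (q : R * R) : Prop :=
  0 < fst q < t /\ c < snd q < G0.

Definition regionII (c G0 t : R) (q : R * R) : Prop :=
  let s := sK t (fst q) in let p := snd q in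
  inD c G0 t q /\
  p ^ 2 >= 4 * c * G0 * s * (1 - s) /\ p < G0 * (1 - s) + c * s /\
  p < sqrt (c * G0) /\ s < 1 / 2.

Definition regionIII (c G0 t : R) (q : R * R) : Prop :=
  let s := sK t (fst q) in let p := snd q in
  inD c G0 t q /\
  p ^ 2 >= 4 * c * G0 * s * (1 - s) /\ p < G0 * (1 - s) + c * s /\
  p < sqrt (c * G0) /\ s > G0 / (G0 + c).

Definition regionVII (c G0 t : R) (q : R * R) : Prop :=
  let s := sK t (fst q) in let p := snd q in
  inD c G0 t q /\
  p ^ 2 >= 4 * c * G0 * s * (1 - s) /\ p > G0 * (1 - s) + c * s /\
  p > sqrt (c * G0).

Definition closure2 (S : R * R -> Prop) (q : R * R) : Prop :=
  forall eps : R, 0 < eps ->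
    exists x, S x /\ Rabs (fst x - fst q) < eps /\ Rabs (snd x - snd q) < eps.

Definition closureInD (c G0 t : R) (S : R * R -> Prop) (q : R * R) : Prop :=
  closure2 S q /\ inD c G0 t q.

Definition maxAttainedAt (c G0 t : R) (S : R * R -> Prop) (q : R * R) : Prop :=
  S q /\ forall x, S x -> coopArea c G0 t (fst x) (snd x) <= coopArea c G0 t (fst q) (snd q).

From Stdlib Require Import Reals Lra Psatz.
From Coquelicot Require Import Coquelicot.
Open Scope R_scope.

(* Write s = tau/t and r = p/K(w).  The integrand of A is
   max{min(1 - c/(w r), 1 - r/Gamma_0), 0}, which vanishes for w Gamma_0 <= c and,
   for fixed w, increases in r up to r^2 = c Gamma_0 / w and decreases afterwards.
   At the maximisers of regions II and III the ratio r(w) stays on the increasing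
   side and dominates the ratio of every point of the closure; at the maximiser of
   region VII it stays on the decreasing side and is dominated by the ratio of every
   point of the closure.  Hence the areas compare pointwise in w.  The constraints
   on the closures are the non-strict versions of the affine inequalities in (s, p)
   defining the regions, and each maximiser is a limit of an explicit curve inside
   its region. *)

Lemma Rdiv_le_cross a b x y : 0 < b -> 0 < y -> a * y <= x * b -> a / b <= x / y.
Proof.
  intros hb hy hcross. apply (Rle_div_r _ _ _ hy).
  replace (a / b * y) with (a * y / b) by (field; lra).
  apply (Rle_div_l _ _ _ hb). lra.
Qed.

Lemma mul_sq_div_le w a b C : 0 < b -> w * a ^ 2 <= C * b ^ 2 -> w * (a / b) ^ 2 <= C.
Proof.
  intros hb hab. replace (w * (a / b) ^ 2) with (w * a ^ 2 / b ^ 2) by (field; lra).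
  apply Rle_div_l; [apply pow_lt |]; lra.
Qed.

Lemma mul_sq_div_ge w a b C : 0 < b -> C * b ^ 2 <= w * a ^ 2 -> C <= w * (a / b) ^ 2.
Proof.
  intros hb hab. replace (w * (a / b) ^ 2) with (w * a ^ 2 / b ^ 2) by (field; lra).
  apply Rle_div_r; [apply pow_lt |]; lra.
Qed.

Lemma K_pos s w : s < 1 -> 0 <= w <= 1 -> 0 < 1 - (1 - w) * s.
Proof. intros hs hw. destruct (Rle_lt_dec 0 s); nra. Qed.

Lemma sK_scale t s : t <> 0 -> sK t (s * t) = s.
Proof. intro ht. unfold sK. field. exact ht. Qed.

Lemma Rmax_abs a b : Rmax a b = (a + b + Rabs (a - b)) / 2.
Proof.
  unfold Rmax; destruct (Rle_dec a b).
  - rewrite Rabs_left1; lra.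
  - rewrite Rabs_right; lra.
Qed.

Lemma Rmin_abs a b : Rmin a b = (a + b - Rabs (a - b)) / 2.
Proof.
  unfold Rmin; destruct (Rle_dec a b).
  - rewrite Rabs_left1; lra.
  - rewrite Rabs_right; lra.
Qed.

Lemma continuous_Rmax (f g : R -> R) x : continuous f x -> continuous g x ->
  continuous (fun y => Rmax (f y) (g y)) x.
Proof.
  intros hf hg. apply (continuous_ext (fun y => (f y + g y + Rabs (f y - g y)) / 2)).
  { intro y. symmetry. apply Rmax_abs. }
  apply continuity_pt_filterlim in hf. apply continuity_pt_filterlim in hg.
  apply continuity_pt_filterlim.
  apply continuity_pt_div; [| apply continuity_pt_const; now intros ? ? | lra].
  apply continuity_pt_plus; [now apply continuity_pt_plus |].
  apply (continuity_pt_comp (fun y => f y - g y));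
    [now apply continuity_pt_minus | apply Rcontinuity_abs].
Qed.

Lemma continuous_Rmin (f g : R -> R) x : continuous f x -> continuous g x ->
  continuous (fun y => Rmin (f y) (g y)) x.
Proof.
  intros hf hg. apply (continuous_ext (fun y => (f y + g y - Rabs (f y - g y)) / 2)).
  { intro y. symmetry. apply Rmin_abs. }
  apply continuity_pt_filterlim in hf. apply continuity_pt_filterlim in hg.
  apply continuity_pt_filterlim.
  apply continuity_pt_div; [| apply continuity_pt_const; now intros ? ? | lra].
  apply continuity_pt_minus; [now apply continuity_pt_plus |].
  apply (continuity_pt_comp (fun y => f y - g y));
    [now apply continuity_pt_minus | apply Rcontinuity_abs].
Qed.

Lemma closure2_affine_le S q a b g : closure2 S q ->
  (forall x, S x -> a * fst x + b * snd x <= g) -> a * fst q + b * snd q <= g.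
Proof.
  intros hcl hS. apply Rnot_lt_le. intros hlt.
  set (k := Rabs a + Rabs b + 1).
  assert (hk : 0 < k) by (unfold k; pose proof (Rabs_pos a); pose proof (Rabs_pos b); lra).
  set (eps := (a * fst q + b * snd q - g) / k).
  assert (heps : 0 < eps) by (apply Rdiv_lt_0_compat; lra).
  destruct (hcl eps heps) as [x [hx [h1 h2]]].
  assert (Rabs (a * (fst x - fst q)) <= Rabs a * eps)
    by (rewrite Rabs_mult; apply Rmult_le_compat_l; [apply Rabs_pos | lra]).
  assert (Rabs (b * (snd x - snd q)) <= Rabs b * eps)
    by (rewrite Rabs_mult; apply Rmult_le_compat_l; [apply Rabs_pos | lra]).
  assert (eps * k = a * fst q + b * snd q - g) by (unfold eps; field; lra).
  pose proof (Rabs_maj2 (a * (fst x - fst q))). pose proof (Rabs_maj2 (b * (snd x - snd q))).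
  specialize (hS x hx). unfold k in *. nra.
Qed.

Lemma closure2_scaled_affine_le S q t a b g : 0 < t -> closure2 S q ->
  (forall x, S x -> a * (fst x / t) + b * snd x <= g) -> a * (fst q / t) + b * snd q <= g.
Proof.
  intros ht hcl hS.
  replace (a * (fst q / t)) with (a / t * fst q) by (field; lra).
  apply (closure2_affine_le S); [exact hcl |].
  intros x hx. replace (a / t * fst x) with (a * (fst x / t)) by (field; lra). now apply hS.
Qed.

Lemma closure2_of_approx S q k delta : 0 < k -> 0 < delta ->
  (forall d, 0 < d < delta -> exists x,
     S x /\ Rabs (fst x - fst q) <= k * d /\ Rabs (snd x - snd q) <= k * d) ->
  closure2 S q.
Proof.
  intros hk hdelta happrox eps heps.
  set (d := Rmin (delta / 2) (eps / (2 * k))).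
  assert (hd : 0 < d) by (apply Rmin_pos; apply Rdiv_lt_0_compat; lra).
  assert (hd1 : d <= delta / 2) by apply Rmin_l.
  assert (hkd : k * d <= eps / 2).
  { assert (hde : d <= eps / (2 * k)) by apply Rmin_r.
    apply Rle_div_r in hde; lra. }
  destruct (happrox d) as [x [hx [h1 h2]]]; [lra |].
  exists x. repeat split; [exact hx | lra | lra].
Qed.

Definition coopWidth (c G0 w r : R) : R :=
  Rmax (Rmin (1 - c / (w * r)) (1 - r / G0)) 0.

Definition coopAreaS (c G0 s p : R) : R :=
  RInt (fun w => coopWidth c G0 w (p / (1 - (1 - w) * s))) 0 1.

Lemma coopAreaE c G0 t tau p : coopArea c G0 t tau p = coopAreaS c G0 (tau / t) p.
Proof.
  apply RInt_ext. intros w _.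
  unfold d_s, d_c, coopWidth, Kw, sK, Rdiv. rewrite !Rinv_mult, Rinv_inv.
  f_equal. f_equal; ring.
Qed.

Lemma continuous_coopWidth c G0 s p z : 0 < z -> 0 < 1 - (1 - z) * s -> 0 < p -> G0 <> 0 ->
  continuous (fun w => coopWidth c G0 w (p / (1 - (1 - w) * s))) z.
Proof.
  intros hz hK hp hG. unfold coopWidth.
  apply continuous_Rmax; [apply continuous_Rmin | apply continuous_const];
    apply (@ex_derive_continuous R_AbsRing R_NormedModule); auto_derive;
    repeat split; repeat apply Rmult_integral_contrapositive_currified;
    try apply Rinv_neq_0_compat; lra.
Qed.

Section Width.
Variables c G0 : R.
Hypothesis hc : 0 < c.
Hypothesis hG : 0 < G0.

Lemma coopWidth_eq0 w r : 0 < w -> 0 < r -> w * G0 <= c -> coopWidth c G0 w r = 0.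
Proof.
  intros hw hr hwG. unfold coopWidth. apply Rmax_right.
  destruct (Rle_lt_dec G0 r) as [hGr | hrG].
  - assert (1 <= r / G0) by (apply (Rle_div_r _ _ _ hG); lra).
    pose proof (Rmin_r (1 - c / (w * r)) (1 - r / G0)). lra.
  - assert (1 <= c / (w * r)) by (apply Rle_div_r; nra).
    pose proof (Rmin_l (1 - c / (w * r)) (1 - r / G0)). lra.
Qed.

Lemma coopWidth_le_incr w r1 r2 : 0 < w -> 0 < r1 <= r2 -> w * r2 ^ 2 <= c * G0 ->
  coopWidth c G0 w r1 <= coopWidth c G0 w r2.
Proof.
  intros hw hr hpeak. unfold coopWidth.
  assert (w * r1 <= w * r2) by nra.
  assert (c / (w * r2) <= c / (w * r1)) by (apply Rdiv_le_cross; nra).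
  assert (r2 / G0 <= c / (w * r2)) by (apply Rdiv_le_cross; nra).
  rewrite (Rmin_left (1 - c / (w * r2))) by lra.
  apply Rle_max_compat_r.
  pose proof (Rmin_l (1 - c / (w * r1)) (1 - r1 / G0)). lra.
Qed.

Lemma coopWidth_le_decr w r1 r2 : 0 < w -> 0 < r2 <= r1 -> c * G0 <= w * r2 ^ 2 ->
  coopWidth c G0 w r1 <= coopWidth c G0 w r2.
Proof.
  intros hw hr hpeak. unfold coopWidth.
  assert (r2 / G0 <= r1 / G0) by (apply Rdiv_le_cross; nra).
  assert (c / (w * r2) <= r2 / G0) by (apply Rdiv_le_cross; nra).
  rewrite (Rmin_right _ (1 - r2 / G0)) by lra.
  apply Rle_max_compat_r.
  pose proof (Rmin_r (1 - c / (w * r1)) (1 - r1 / G0)). lra.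
Qed.

End Width.

Section Model.
Variables c G0 : R.
Hypothesis hc : 0 < c.
Hypothesis hcG : c < G0.

Local Notation m := (sqrt (c * G0)).

Lemma sqrt_cG0_sq : m ^ 2 = c * G0.
Proof. apply pow2_sqrt. nra. Qed.

Lemma sqrt_cG0_bounds : c < m < G0.
Proof. pose proof sqrt_cG0_sq. pose proof (sqrt_pos (c * G0)). split; nra. Qed.

Lemma ex_RInt_coopWidth s p : s < 1 -> 0 < p ->
  ex_RInt (fun w => coopWidth c G0 w (p / (1 - (1 - w) * s))) 0 1.
Proof.
  intros hs hp.
  assert (he : 0 < c / G0 < 1).
  { split; [apply Rdiv_lt_0_compat; lra | apply Rlt_div_l; lra]. }
  apply (ex_RInt_Chasles _ 0 (c / G0) 1).
  - apply (ex_RInt_ext (fun _ => 0)); [| apply ex_RInt_const].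
    intros w hw. rewrite Rmin_left, Rmax_right in hw by lra.
    assert (hK : 0 < 1 - (1 - w) * s) by (apply K_pos; lra).
    symmetry. apply coopWidth_eq0; try lra.
    + apply Rdiv_lt_0_compat; lra.
    + destruct hw as [_ hw]. apply Rlt_div_r in hw; lra.
  - apply (@ex_RInt_continuous R_CompleteNormedModule). intros z hz.
    rewrite Rmin_left, Rmax_right in hz by lra.
    apply continuous_coopWidth; try lra. apply K_pos; lra.
Qed.

Lemma coopAreaS_le s1 p1 s2 p2 : s1 < 1 -> s2 < 1 -> 0 < p1 -> 0 < p2 ->
  (forall w, 0 < w < 1 -> c < G0 * w ->
     coopWidth c G0 w (p1 / (1 - (1 - w) * s1))
       <= coopWidth c G0 w (p2 / (1 - (1 - w) * s2))) ->
  coopAreaS c G0 s1 p1 <= coopAreaS c G0 s2 p2.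
Proof.
  intros hs1 hs2 hp1 hp2 hle.
  apply RInt_le; try lra; try apply ex_RInt_coopWidth; try lra.
  intros w hw. destruct (Rlt_le_dec c (G0 * w)) as [hcw | hwc]; [now apply hle |].
  rewrite !coopWidth_eq0; try lra; apply Rdiv_lt_0_compat; try lra; apply K_pos; lra.
Qed.

Lemma coopWidth_le_peakII w s p : 0 < w < 1 -> s <= 1 / 2 -> 0 < p <= m ->
  coopWidth c G0 w (p / (1 - (1 - w) * s))
    <= coopWidth c G0 w (m / (1 - (1 - w) * (1 / 2))).
Proof.
  intros hw hs hp. pose proof sqrt_cG0_bounds.
  assert (hK : 1 - (1 - w) * (1 / 2) <= 1 - (1 - w) * s) by nra.
  apply coopWidth_le_incr; try lra.
  - split; [apply Rdiv_lt_0_compat | apply Rdiv_le_cross]; nra.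
  - apply mul_sq_div_le; [lra |]. rewrite sqrt_cG0_sq.
    assert (0 <= c * G0 * (1 - w) ^ 2) by (apply Rmult_le_pos; nra).
    nra.
Qed.

Lemma coopWidth_le_peakIII w s p : 0 < w < 1 -> c < G0 * w -> G0 <= (G0 + c) * s -> s < 1 ->
  0 < p <= G0 * (1 - s) + c * s ->
  coopWidth c G0 w (p / (1 - (1 - w) * s))
    <= coopWidth c G0 w (2 * G0 * c / (G0 + c) / (1 - (1 - w) * (G0 / (G0 + c)))).
Proof.
  intros hw hwG hsG hs hp.
  replace (2 * G0 * c / (G0 + c) / (1 - (1 - w) * (G0 / (G0 + c))))
    with (2 * G0 * c / (c + G0 * w)) by (field; lra).
  assert (hK : 0 < 1 - (1 - w) * s) by (apply K_pos; lra).
  apply coopWidth_le_incr; try lra.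
  - split; [apply Rdiv_lt_0_compat; lra |].
    apply Rdiv_le_cross; [lra | nra |].
    assert (0 <= (c + G0 * w) * (G0 * (1 - s) + c * s - p)) by nra.
    assert (0 <= ((G0 + c) * s - G0) * (G0 * w - c)) by nra.
    nra.
  - apply mul_sq_div_le; [nra |].
    assert (0 <= c * G0 * (G0 * w - c) ^ 2) by (apply Rmult_le_pos; nra).
    nra.
Qed.

Lemma coopWidth_le_peakVII w s p : 0 < w < 1 -> c < G0 * w -> s < 1 -> m <= p ->
  G0 * (1 - s) + c * s <= p ->
  coopWidth c G0 w (p / (1 - (1 - w) * s))
    <= coopWidth c G0 w (m / (1 - (1 - w) * ((G0 - m) / (G0 - c)))).
Proof.
  intros hw hwG hs hpm hpL. pose proof sqrt_cG0_sq as hm2. pose proof sqrt_cG0_bounds.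
  assert (hK : 0 < 1 - (1 - w) * s) by (apply K_pos; lra).
  assert (hK7 : 0 < G0 * w - c + (1 - w) * m) by nra.
  replace (m / (1 - (1 - w) * ((G0 - m) / (G0 - c))))
    with (m * (G0 - c) / (G0 * w - c + (1 - w) * m)) by (field; split; lra).
  apply coopWidth_le_decr; try lra.
  - split; [apply Rdiv_lt_0_compat; nra |].
    apply Rdiv_le_cross; [lra | lra |].
    assert (0 <= m * (1 - w) * (p - (G0 * (1 - s) + c * s)))
      by (apply Rmult_le_pos; [apply Rmult_le_pos |]; lra).
    assert (0 <= (G0 * w - c) * (p - m)) by nra.
    nra.
  - apply mul_sq_div_ge; [nra |].
    (* Freeze [m] so that rewriting [c] below does not touch it. *)
    set (r := m) in *.
    assert (hcr : c = r ^ 2 / G0) by (rewrite hm2; field; lra).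
    assert (E : w * (r * (G0 - c)) ^ 2 - c * G0 * (G0 * w - c + (1 - w) * r) ^ 2
                = c * ((G0 - r) ^ 2 * (G0 * w - c) * (1 - w)))
      by (rewrite hcr; field; lra).
    assert (0 <= c * ((G0 - r) ^ 2 * (G0 * w - c) * (1 - w)))
      by (apply Rmult_le_pos; [lra | apply Rmult_le_pos; [apply Rmult_le_pos |]; nra]).
    lra.
Qed.

Section Regions.
Variable t : R.
Hypothesis ht : 0 < t.

Lemma inD_scale s p : 0 < s < 1 -> c < p < G0 -> inD c G0 t (s * t, p).
Proof. intros hs hp. unfold inD; simpl. nra. Qed.

Lemma inD_frac q : inD c G0 t q -> 0 < fst q / t < 1 /\ c < snd q < G0.
Proof.
  intros [hq hp]. split; [| exact hp].
  split; [apply Rdiv_lt_0_compat | apply Rlt_div_l]; lra.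
Qed.

Lemma regionII_scale s p : 0 < s < 1 -> c < p < G0 -> p ^ 2 >= 4 * c * G0 * s * (1 - s) ->
  p < G0 * (1 - s) + c * s -> p < m -> s < 1 / 2 -> regionII c G0 t (s * t, p).
Proof.
  intros. unfold regionII. cbn [fst snd]. rewrite sK_scale by lra.
  split; [now apply inD_scale | tauto].
Qed.

Lemma regionIII_scale s p : 0 < s < 1 -> c < p < G0 -> p ^ 2 >= 4 * c * G0 * s * (1 - s) ->
  p < G0 * (1 - s) + c * s -> p < m -> G0 < (G0 + c) * s -> regionIII c G0 t (s * t, p).
Proof.
  intros. unfold regionIII. cbn [fst snd]. rewrite sK_scale by lra.
  split; [now apply inD_scale | repeat split; try tauto].
  apply Rlt_gt, Rlt_div_l; lra.
Qed.

Lemma regionVII_scale s p : 0 < s < 1 -> c < p < G0 -> p ^ 2 >= 4 * c * G0 * s * (1 - s) ->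
  p > G0 * (1 - s) + c * s -> p > m -> regionVII c G0 t (s * t, p).
Proof.
  intros. unfold regionVII. cbn [fst snd]. rewrite sK_scale by lra.
  split; [now apply inD_scale | tauto].
Qed.

Lemma regionII_closure_bounds q : closureInD c G0 t (regionII c G0 t) q ->
  fst q / t <= 1 / 2 /\ snd q <= m.
Proof.
  intros [hcl _]. split.
  - enough (1 * (fst q / t) + 0 * snd q <= 1 / 2) by lra.
    apply (closure2_scaled_affine_le _ _ _ _ _ _ ht hcl).
    intros x (_ & _ & _ & _ & hx). unfold sK in hx. lra.
  - enough (0 * (fst q / t) + 1 * snd q <= m) by lra.
    apply (closure2_scaled_affine_le _ _ _ _ _ _ ht hcl).
    intros x (_ & _ & _ & hx & _). lra.
Qed.

Lemma regionIII_closure_bounds q : closureInD c G0 t (regionIII c G0 t) q ->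
  G0 <= (G0 + c) * (fst q / t) /\ snd q <= G0 * (1 - fst q / t) + c * (fst q / t).
Proof.
  intros [hcl _]. split.
  - enough (- (G0 + c) * (fst q / t) + 0 * snd q <= - G0) by lra.
    apply (closure2_scaled_affine_le _ _ _ _ _ _ ht hcl).
    intros x (_ & _ & _ & _ & hx). unfold sK in hx.
    apply (Rlt_div_l G0 (fst x / t) (G0 + c)) in hx; lra.
  - enough ((G0 - c) * (fst q / t) + 1 * snd q <= G0) by lra.
    apply (closure2_scaled_affine_le _ _ _ _ _ _ ht hcl).
    intros x (_ & _ & hx & _). unfold sK in hx. lra.
Qed.

Lemma regionVII_closure_bounds q : closureInD c G0 t (regionVII c G0 t) q ->
  m <= snd q /\ G0 * (1 - fst q / t) + c * (fst q / t) <= snd q.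
Proof.
  intros [hcl _]. split.
  - enough (0 * (fst q / t) + (-1) * snd q <= - m) by lra.
    apply (closure2_scaled_affine_le _ _ _ _ _ _ ht hcl).
    intros x (_ & _ & _ & hx). lra.
  - enough (- (G0 - c) * (fst q / t) + (-1) * snd q <= - G0) by lra.
    apply (closure2_scaled_affine_le _ _ _ _ _ _ ht hcl).
    intros x (_ & _ & hx & _). unfold sK in hx. lra.
Qed.

Lemma regionII_peak_closure : closureInD c G0 t (regionII c G0 t) (t / 2, m).
Proof.
  pose proof sqrt_cG0_sq as hm2. pose proof sqrt_cG0_bounds as hm.
  assert (hmean : 2 * m < G0 + c) by nra.
  split; [| unfold inD; simpl; lra].
  apply (closure2_of_approx _ _ (t + m) (Rmin (1 / 2) ((m - c) / m))); [lra | |].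
  { apply Rmin_pos; [lra | apply Rdiv_lt_0_compat; lra]. }
  intros d [hd hdd]. apply Rmin_Rgt_l in hdd as [hd1 hd2].
  apply Rlt_div_r in hd2; [| lra].
  exists ((1 / 2 - d) * t, m * (1 - d ^ 2)). cbn [fst snd]. split; [| split].
  - assert (0 < m * d ^ 2 < m - c).
    { assert (0 < m * d * (1 - d)) by (apply Rmult_lt_0_compat; nra). split; nra. }
    apply regionII_scale; try lra.
    + replace (4 * c * G0 * (1 / 2 - d) * (1 - (1 / 2 - d))) with (m ^ 2 * (1 - 4 * d ^ 2))
        by (rewrite hm2; field).
      assert (0 <= m ^ 2 * (2 * d ^ 2 + d ^ 4)) by (apply Rmult_le_pos; nra).
      nra.
    + nra.
  - apply Rabs_le. nra.
  - apply Rabs_le. nra.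
Qed.

Lemma regionIII_peak_closure :
  closureInD c G0 t (regionIII c G0 t) (G0 / (G0 + c) * t, 2 * G0 * c / (G0 + c)).
Proof.
  pose proof sqrt_cG0_sq as hm2. pose proof sqrt_cG0_bounds as hm.
  set (ss := G0 / (G0 + c)). set (ps := 2 * G0 * c / (G0 + c)).
  assert (hss : (G0 + c) * ss = G0) by (unfold ss; field; lra).
  assert (hps : ps = 2 * c * ss) by (unfold ps, ss; field; lra).
  assert (hssb : 1 / 2 < ss < 1) by (split; nra).
  assert (hpsc : c < ps) by nra.
  assert (hpsm : ps <= m).
  { apply Rsqr_incr_0_var; [| pose proof (sqrt_pos (c * G0)); lra].
    rewrite !Rsqr_pow2, hm2, hps.
    assert (G0 * (G0 - 4 * c * ss ^ 2) = ss ^ 2 * (G0 - c) ^ 2) by (unfold ss; field; lra).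
    assert (0 <= ss ^ 2 * (G0 - c) ^ 2) by (apply Rmult_le_pos; apply pow2_ge_0).
    assert (0 <= G0 - 4 * c * ss ^ 2) by nra.
    nra. }
  set (q := (G0 + c) ^ 2 / (2 * G0)).
  assert (hq : 0 < q) by (unfold q; apply Rdiv_lt_0_compat; nra).
  split; [| apply inD_scale; lra].
  apply (closure2_of_approx _ _ (t + (G0 - c) + q)
           (Rmin (Rmin 1 (1 - ss)) ((ps - c) / (G0 - c + q)))); [lra | |].
  { apply Rmin_pos; [apply Rmin_pos | apply Rdiv_lt_0_compat]; lra. }
  intros d [hd hdd]. apply Rmin_Rgt_l in hdd as [hdd hd3]. apply Rmin_Rgt_l in hdd as [hd1 hd2].
  apply Rlt_div_r in hd3; [| lra].
  (* The line p = G0 (1 - s) + c s is tangent to the ellipse p^2 = 4 c G0 s (1 - s) at the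
     maximiser, so the curve has to stay within O(d^2) below that line. *)
  set (L := ps - (G0 - c) * d). set (X := q * d ^ 2).
  assert (hL : G0 * (1 - (ss + d)) + c * (ss + d) = L) by (unfold L; nra).
  assert (htangent : L ^ 2 - 4 * c * G0 * (ss + d) * (1 - (ss + d)) = ((G0 + c) * d) ^ 2)
    by (unfold L, ps, ss; field; lra).
  assert (h2X : 2 * G0 * X = ((G0 + c) * d) ^ 2) by (unfold X, q; field; lra).
  assert (hX : 0 < X) by (unfold X; apply Rmult_lt_0_compat; [lra | apply pow_lt; lra]).
  assert (hXd : X <= q * d).
  { assert (0 <= q * d * (1 - d)) by (apply Rmult_le_pos; nra). unfold X. nra. }
  exists ((ss + d) * t, L - X). cbn [fst snd]. split; [| split].
  - apply regionIII_scale; try lra.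
    + unfold L. split; nra.
    + assert (0 <= (G0 - L) * X) by (apply Rmult_le_pos; unfold L; nra).
      nra.
    + unfold L. nra.
    + nra.
  - apply Rabs_le. nra.
  - apply Rabs_le. unfold L. nra.
Qed.

Lemma regionVII_peak_closure :
  closureInD c G0 t (regionVII c G0 t) ((G0 - m) / (G0 - c) * t, m).
Proof.
  pose proof sqrt_cG0_sq as hm2. pose proof sqrt_cG0_bounds as hm.
  set (s7 := (G0 - m) / (G0 - c)).
  assert (hs7 : (G0 - c) * s7 = G0 - m) by (unfold s7; field; lra).
  assert (hs7b : 0 < s7 < 1) by (split; nra).
  split; [| apply inD_scale; lra].
  apply (closure2_of_approx _ _ (t + 1) (Rmin (1 - s7) (G0 - m))); [lra | apply Rmin_pos; lra |].
  intros d [hd hdd]. apply Rmin_Rgt_l in hdd as [hd1 hd2].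
  exists ((s7 + d) * t, m + d). cbn [fst snd]. split; [| split].
  - apply regionVII_scale; try lra.
    + assert (0 <= c * G0 * (2 * (s7 + d) - 1) ^ 2)
        by (apply Rmult_le_pos; [nra | apply pow2_ge_0]).
      nra.
    + nra.
  - apply Rabs_le. nra.
  - apply Rabs_le. nra.
Qed.

Lemma regionII_max : maxAttainedAt c G0 t (closureInD c G0 t (regionII c G0 t)) (t / 2, m).
Proof.
  split; [exact regionII_peak_closure |].
  intros q hq. pose proof sqrt_cG0_bounds.
  destruct (regionII_closure_bounds q hq) as [hs hp].
  destruct (inD_frac q (proj2 hq)) as [hs01 hp01].
  cbn [fst snd]. rewrite !coopAreaE.
  replace (t / 2 / t) with (1 / 2) by (field; lra).
  apply coopAreaS_le; try lra.
  intros w hw _. apply coopWidth_le_peakII; lra.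
Qed.

Lemma regionIII_max : maxAttainedAt c G0 t (closureInD c G0 t (regionIII c G0 t))
  (G0 / (G0 + c) * t, 2 * G0 * c / (G0 + c)).
Proof.
  split; [exact regionIII_peak_closure |].
  intros q hq.
  destruct (regionIII_closure_bounds q hq) as [hs hp].
  destruct (inD_frac q (proj2 hq)) as [hs01 hp01].
  cbn [fst snd]. rewrite !coopAreaE.
  replace (G0 / (G0 + c) * t / t) with (G0 / (G0 + c)) by (field; lra).
  apply coopAreaS_le; try lra.
  - apply Rlt_div_l; lra.
  - apply Rdiv_lt_0_compat; nra.
  - intros w hw hwG. apply coopWidth_le_peakIII; lra.
Qed.

Lemma regionVII_max : maxAttainedAt c G0 t (closureInD c G0 t (regionVII c G0 t))
  ((G0 - m) / (G0 - c) * t, m).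
Proof.
  split; [exact regionVII_peak_closure |].
  intros q hq. pose proof sqrt_cG0_bounds.
  destruct (regionVII_closure_bounds q hq) as [hp hpL].
  destruct (inD_frac q (proj2 hq)) as [hs01 hp01].
  cbn [fst snd]. rewrite !coopAreaE.
  replace ((G0 - m) / (G0 - c) * t / t) with ((G0 - m) / (G0 - c)) by (field; lra).
  apply coopAreaS_le; try lra.
  - apply Rlt_div_l; lra.
  - intros w hw hwG. apply coopWidth_le_peakVII; lra.
Qed.

End Regions.
End Model.

Theorem proposition2 (c G0 t : R) (hc : 0 < c) (hcG : c < G0) (ht : 0 < t) :
  maxAttainedAt c G0 t (closureInD c G0 t (regionII c G0 t))
    (t / 2, sqrt (c * G0)) /\
  maxAttainedAt c G0 t (closureInD c G0 t (regionIII c G0 t))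
    (G0 / (G0 + c) * t, 2 * G0 * c / (G0 + c)) /\
  maxAttainedAt c G0 t (closureInD c G0 t (regionVII c G0 t))
    ((G0 - sqrt (c * G0)) / (G0 - c) * t, sqrt (c * G0)).
Proof.
  split; [| split].
  - now apply regionII_max.
  - now apply regionIII_max.
  - now apply regionVII_max.
Qed.
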